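(* Let $\hat Q^\pi\in\mathcal H$ satisfy $\hat C_{\omega_0,\omega_0}\hat Q^\pi-\big[\hat C_{\omega_0,\omega_0}r+\gamma\hat C_{\omega_0,\omega_1}\hat Q^\pi\big]+\lambda\hat Q^\pi=0$ (equivalently, $\hat Q^\pi$ is the kernel TD estimator). Then $\hat Q^\pi\in\hat{\mathcal H}:=\mathrm{span}\{K(\omega_0^{(i)},\cdot):i=1,\dots,n\}$.
   Context: $\mathcal S\subset\mathbb R^{d_s}$, $\mathcal A\subset\mathbb R^{d_a}$ compact convex; $K$ a symmetric positive definite kernel on $\mathcal S\times\mathcal A$ with bounded diagonal and RKHS $\mathcal H$; $r\in\mathcal H$; $\gamma\in[0,1]$, $\lambda>0$. Sample points $\omega_0^{(i)},\omega_1^{(i)}\in\mathcal S\times\mathcal A$, $i=1,\dots,n$. Empirical operators: $\hat C_{\omega_0,\omega_0}g=\frac1n\sum_{i=1}^ng(\omega_0^{(i)})K(\omega_0^{(i)},\cdot)$ and $\hat C_{\omega_0,\omega_1}g=\frac1n\sum_{i=1}^ng(\omega_1^{(i)})K(\omega_0^{(i)},\cdot)$ for $g\in\mathcal H$. *)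

From HB Require Import structures.
From mathcomp Require Import all_boot all_order all_algebra.
From mathcomp Require Import all_classical all_reals all_analysis.
Set Implicit Arguments. Unset Strict Implicit. Unset Printing Implicit Defensive.
Import Order.TTheory GRing.Theory Num.Theory numFieldNormedType.Exports.
Local Open Scope ring_scope.
Local Open Scope classical_set_scope.

Definition SA (R : realType) (ds da : nat)
  (S : set 'rV[R]_ds) (A : set 'rV[R]_da) : Type :=
  {p : 'rV[R]_ds * 'rV[R]_da | S p.1 /\ A p.2}.

Definition sym_pd_kernel (R : realType) (X : Type) (K : X -> X -> R) : Prop :=
  (forall x y, K x y = K y x) /\
  (forall (m : nat) (x : 'I_m -> X) (c : 'I_m -> R),
      0 <= \sum_(i < m) \sum_(j < m) c i * c j * K (x i) (x j)).

Definition bounded_diag (R : realType) (X : Type) (K : X -> X -> R) : Prop :=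
  exists M : R, forall x, K x x <= M.

Definition is_RKHS (R : realType) (X : Type) (K : X -> X -> R)
  (H : set (X -> R)) (ip : (X -> R) -> (X -> R) -> R) : Prop :=
  [/\ H (fun _ => 0),
      (forall f g, H f -> H g -> H (fun x => f x + g x)) &
      (forall (a : R) f, H f -> H (fun x => a * f x))] /\
      [/\ (forall f g, H f -> H g -> ip f g = ip g f),
          (forall f g h, H f -> H g -> H h ->
             ip (fun x => f x + g x) h = ip f h + ip g h),
          (forall (a : R) f g, H f -> H g -> ip (fun x => a * f x) g = a * ip f g),
          (forall f, H f -> 0 <= ip f f) &
          (forall f, H f -> ip f f = 0 -> f = (fun _ => 0))] /\
      (forall u : nat -> (X -> R), (forall k, H (u k)) ->
         (forall e : R, 0 < e -> exists N, forall m p, (N <= m)%N -> (N <= p)%N ->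
             Num.sqrt (ip (fun x => u m x - u p x) (fun x => u m x - u p x)) < e) ->
         exists g, H g /\ forall e : R, 0 < e -> exists N, forall m, (N <= m)%N ->
             Num.sqrt (ip (fun x => u m x - g x) (fun x => u m x - g x)) < e) /\
      (forall x, H (K x)) /\
      (forall f x, H f -> ip f (K x) = f x).

Definition Chat00 (R : realType) (X : Type) (K : X -> X -> R) (n : nat)
  (w0 : 'I_n -> X) (g : X -> R) : X -> R :=
  fun x => n%:R^-1 * \sum_(i < n) g (w0 i) * K (w0 i) x.

Definition Chat01 (R : realType) (X : Type) (K : X -> X -> R) (n : nat)
  (w0 w1 : 'I_n -> X) (g : X -> R) : X -> R :=
  fun x => n%:R^-1 * \sum_(i < n) g (w1 i) * K (w0 i) x.

Definition feature_span (R : realType) (X : Type) (K : X -> X -> R) (n : nat)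
  (w0 : 'I_n -> X) : set (X -> R) :=
  [set f | exists c : 'I_n -> R, f = fun x => \sum_(i < n) c i * K (w0 i) x].

From HB Require Import structures.
From mathcomp Require Import all_boot all_order all_algebra.
From mathcomp Require Import all_classical all_reals all_analysis.
From mathcomp Require Import ring.
Import Order.TTheory GRing.Theory Num.Theory numFieldNormedType.Exports.
Local Open Scope ring_scope.
Local Open Scope classical_set_scope.

(* Both empirical operators take values in the span of the features
   K(w0_i, .), and the TD equation expresses lambda Q as a combination of such
   values; since lambda > 0, Q itself lies in that span.  No property of the
   kernel or of the RKHS is needed. *)

Section FeatureSpan.

Set Implicit Arguments.
Unset Strict Implicit.

Variables (R : realType) (X : Type) (K : X -> X -> R) (n : nat) (w0 : 'I_n -> X).

Lemma feature_span_scale (a : R) (f : X -> R) :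
  feature_span K w0 f -> feature_span K w0 (fun x => a * f x).
Proof.
move=> [c ->]; exists (fun i => a * c i); apply: funext => x.
by rewrite mulr_sumr; apply: eq_bigr => i _; rewrite mulrA.
Qed.

Lemma feature_span_add (f g : X -> R) :
  feature_span K w0 f -> feature_span K w0 g ->
  feature_span K w0 (fun x => f x + g x).
Proof.
move=> [c ->] [d ->]; exists (fun i => c i + d i); apply: funext => x.
by rewrite -big_split; apply: eq_bigr => i _; rewrite mulrDl.
Qed.

Lemma feature_span_sub (f g : X -> R) :
  feature_span K w0 f -> feature_span K w0 g ->
  feature_span K w0 (fun x => f x - g x).
Proof.
move=> [c ->] [d ->]; exists (fun i => c i - d i); apply: funext => x.
by rewrite -sumrB; apply: eq_bigr => i _; rewrite mulrBl.
Qed.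

Lemma feature_span_avg (c : 'I_n -> R) :
  feature_span K w0 (fun x => n%:R^-1 * \sum_(i < n) c i * K (w0 i) x).
Proof. by apply: feature_span_scale; exists c. Qed.

Lemma Chat00_feature_span (g : X -> R) : feature_span K w0 (Chat00 K w0 g).
Proof. exact: (feature_span_avg (fun i => g (w0 i))). Qed.

Lemma Chat01_feature_span (w1 : 'I_n -> X) (g : X -> R) :
  feature_span K w0 (Chat01 K w0 w1 g).
Proof. exact: (feature_span_avg (fun i => g (w1 i))). Qed.

Lemma TD_fixed_point (w1 : 'I_n -> X) (r Q : X -> R) (gamma lambda : R) :
  lambda != 0 ->
  (forall x, Chat00 K w0 Q x - (Chat00 K w0 r x + gamma * Chat01 K w0 w1 Q x)
               + lambda * Q x = 0) ->
  Q = fun x => lambda^-1 *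
        (Chat00 K w0 r x + gamma * Chat01 K w0 w1 Q x - Chat00 K w0 Q x).
Proof.
move=> lambda_neq0 hTD; apply: funext => x.
apply: (mulfI lambda_neq0); rewrite mulrA divff // mul1r.
apply/eqP; rewrite -subr_eq0 -(hTD x); apply/eqP; ring.
Qed.

End FeatureSpan.

Theorem lemma4 (R : realType) (ds da : nat)
  (S : set 'rV[R]_ds) (A : set 'rV[R]_da)
  (hSc : compact S) (hSv : convex_set (S : set (convex_lmodType 'rV[R]_ds)))
  (hAc : compact A) (hAv : convex_set (A : set (convex_lmodType 'rV[R]_da)))
  (K : SA S A -> SA S A -> R) (hK : sym_pd_kernel K) (hKb : bounded_diag K)
  (H : set (SA S A -> R)) (ip : (SA S A -> R) -> (SA S A -> R) -> R)
  (hH : is_RKHS K H ip)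
  (r : SA S A -> R) (hr : H r)
  (gamma lambda : R) (hg0 : 0 <= gamma) (hg1 : gamma <= 1) (hl : 0 < lambda)
  (n : nat) (hn : (0 < n)%N) (w0 w1 : 'I_n -> SA S A)
  (Q : SA S A -> R) (hQ : H Q)
  (hTD : forall x,
     Chat00 K w0 Q x - (Chat00 K w0 r x + gamma * Chat01 K w0 w1 Q x)
       + lambda * Q x = 0) :
  feature_span K w0 Q.
Proof.
rewrite (TD_fixed_point (lt0r_neq0 hl) hTD).
apply/feature_span_scale/feature_span_sub; last exact: Chat00_feature_span.
apply: feature_span_add; first exact: Chat00_feature_span.
exact/feature_span_scale/Chat01_feature_span.
Qed.
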